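(* Let $d\ge 2$, $\underline E\subset\mathbb F_q^{d-1}$, $A\subset\mathbb F_q$, and $E=\underline E\times A\subset\mathbb F_q^{d-1}\times\mathbb F_q=\mathbb F_q^d$. Then $$\mathfrak M(E)\leq 2q^{-d-1}|A|^2|\underline E|.$$
   Context: $\mathbb F_q$ is a finite field of characteristic greater than two, and $\chi$ is a fixed nontrivial additive character of $\mathbb F_q$. For $f:\mathbb F_q^d\to\mathbb C$, $\widehat f(m)=q^{-d}\sum_{x\in\mathbb F_q^d}\chi(-m\cdot x)f(x)$; sets are identified with their indicator functions. For $m\in\mathbb F_q^d$, $\|m\|=m_1^2+\dots+m_d^2$; $S_r=\{x\in\mathbb F_q^d:\|x\|=r\}$. $\mathfrak M(E)=\max_{r\in\mathbb F_q}\sum_{m\in S_r}|\widehat E(m)|^2$. *)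

From HB Require Import structures.
From mathcomp Require Import all_boot all_order all_algebra all_field.
Set Implicit Arguments. Unset Strict Implicit. Unset Printing Implicit Defensive.
Import Order.TTheory GRing.Theory Num.Theory.
Local Open Scope ring_scope.

Definition nontriv_add_char (F : finFieldType) (chi : F -> algC) : Prop :=
  [/\ chi 0 = 1, (forall x y : F, chi (x + y) = chi x * chi y)
    & exists x : F, chi x != 1].

Definition dotv (F : finFieldType) (d : nat) (m x : 'rV[F]_d) : F :=
  \sum_(i < d) m 0 i * x 0 i.

Definition normq (F : finFieldType) (d : nat) (m : 'rV[F]_d) : F :=
  \sum_(i < d) m 0 i ^+ 2.

Definition sphere (F : finFieldType) (d : nat) (r : F) : {set 'rV[F]_d} :=
  [set x : 'rV[F]_d | normq x == r].

Definition fourier (F : finFieldType) (chi : F -> algC) (d : nat)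
    (f : 'rV[F]_d -> algC) (m : 'rV[F]_d) : algC :=
  (#|F|%:R ^+ d)^-1 * \sum_(x : 'rV[F]_d) chi (- dotv m x) * f x.

Definition indic (T : finType) (E : {set T}) : T -> algC :=
  fun x => (x \in E)%:R.

(* M(E) = max_r sum_{m in S_r} |Ehat(m)|^2 (all terms are nonnegative reals) *)
Definition frakM (F : finFieldType) (chi : F -> algC) (d : nat)
    (E : {set 'rV[F]_d}) : algC :=
  \big[Num.max/0]_(r : F) \sum_(m in sphere d r) `|fourier chi (indic E) m| ^+ 2.

Definition prodset (F : finFieldType) (n : nat) (Ebar : {set 'rV[F]_n})
    (A : {set F}) : {set 'rV[F]_(n + 1)} :=
  [set x : 'rV[F]_(n + 1) | (lsubmx x \in Ebar) && (rsubmx x 0 0 \in A)].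

From Pilot Require Import Defs.
From mathcomp Require Import all_boot all_order all_algebra all_field.
From mathcomp Require Import ring.
Set Implicit Arguments. Unset Strict Implicit. Unset Printing Implicit Defensive.
Import Order.TTheory GRing.Theory Num.Theory.
Local Open Scope ring_scope.

(* Write q = |F|.  Split a frequency m of F^(n+1) as (y, c) with y in F^n and
   c in F.  The indicator of E is the product 1_Ebar(y) 1_A(t), so its
   Fourier transform factors as Ebar_hat(y) * A_hat(c), and the
   one-dimensional factor satisfies |A_hat(c)| <= |A| / q.  On the sphere S_r the frequencies with a given y
   have c^2 = r - ||y||, so each y occurs with at most two values of c.  Hence
       sum_{m in S_r} |Ehat(m)|^2 <= 2 (|A|/q)^2 sum_y |Ebar_hat(y)|^2,
   and Parseval's identity sum_y |fhat(y)|^2 = q^-n sum_x |f(x)|^2 turns the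
   right-hand side into 2 q^(-n-2) |A|^2 |Ebar|.  Since this bound does not
   depend on r, it bounds the maximum M(E). *)

Section AdditiveCharacter.
Variables (F : finFieldType) (chi : F -> algC).
Hypothesis hchi : nontriv_add_char chi.

Lemma chi0 : chi 0 = 1. Proof. by case: hchi. Qed.

Lemma chiD x y : chi (x + y) = chi x * chi y. Proof. by case: hchi. Qed.

Lemma chiNK x : chi (- x) * chi x = 1.
Proof. by rewrite -chiD addNr chi0. Qed.

Lemma chiMn x k : chi (x *+ k) = chi x ^+ k.
Proof. by elim: k => [|k IHk]; rewrite ?mulr0n ?chi0 // mulrS chiD IHk exprS. Qed.

(* Character values are roots of unity of order char F, hence of modulus 1. *)
Lemma norm_chi x : `|chi x| = 1.
Proof.
have [p p_pr pchar_p] := finPcharP F.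
have chi_p : chi x ^+ p = 1 by rewrite -chiMn -mulr_natl (pcharf0 pchar_p) mul0r chi0.
have : `|chi x| ^+ p == 1 by rewrite -normrX chi_p normr1.
by rewrite pexpr_eq1 ?prime_gt0 // => /eqP.
Qed.

(* Since |chi x| = 1, complex conjugation inverts character values. *)
Lemma conj_chi x : (chi x)^* = chi (- x).
Proof.
have chi_x0 : chi x != 0 by apply: contra_eqN (chiNK x) => /eqP->; rewrite mulr0 eq_sym oner_eq0.
apply: (mulfI chi_x0); by rewrite [RHS]mulrC chiNK -normCK norm_chi expr1n.
Qed.

End AdditiveCharacter.

Section DotProduct.
Variable F : finFieldType.

Lemma dotvDl d (a b x : 'rV[F]_d) : dotv (a + b) x = dotv a x + dotv b x.
Proof. by rewrite /dotv -big_split; apply: eq_bigr => i _; rewrite mxE mulrDl. Qed.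

Lemma dotvBr d (a x y : 'rV[F]_d) : dotv a (x - y) = dotv a x - dotv a y.
Proof. by rewrite /dotv -sumrB; apply: eq_bigr => i _; rewrite !mxE mulrBr. Qed.

Lemma dotv0r d (a : 'rV[F]_d) : dotv a 0 = 0.
Proof. by rewrite /dotv big1 // => i _; rewrite mxE mulr0. Qed.

Lemma dotv_delta d (c : F) (i : 'I_d) (x : 'rV[F]_d) :
  dotv (c *: delta_mx 0 i) x = c * x 0 i.
Proof.
rewrite /dotv (bigD1 i) //= big1 ?addr0 => [|j /negbTE j_neq_i].
  by rewrite !mxE !eqxx mulr1.
by rewrite !mxE j_neq_i mulr0 mul0r.
Qed.

End DotProduct.

Section Parseval.
Variables (F : finFieldType) (chi : F -> algC).
Hypothesis hchi : nontriv_add_char chi.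

Lemma card_neq0 : (#|F|%:R : algC) != 0.
Proof. by rewrite pnatr_eq0 -lt0n; apply/card_gt0P; exists 0. Qed.

(* Orthogonality: sum_y chi(y.z) is q^d for z = 0 and vanishes otherwise,
   because translating y by a vector w with w.z = x0, chi x0 != 1, multiplies
   the sum by chi x0. *)
Lemma char_sum_dotv d (z : 'rV[F]_d) :
  \sum_(y : 'rV[F]_d) chi (dotv y z) = (z == 0)%:R * #|F|%:R ^+ d.
Proof.
have [->|z_neq0] := eqVneq z 0.
  rewrite mul1r (eq_bigr (fun _ => 1)) => [|y _]; last by rewrite dotv0r chi0.
  by rewrite sumr_const card_mx mul1n natrX.
have [i zi_neq0] : exists i, z 0 i != 0.
  apply/existsP; apply: contraR z_neq0 => /existsPn z_eq0.
  by apply/eqP/rowP => j; rewrite mxE; apply/eqP; rewrite -[_ == _]negbK z_eq0.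
have [_ _ [x0 chi_x0]] := hchi.
pose w : 'rV[F]_d := (x0 / z 0 i) *: delta_mx 0 i.
set S := \sum_y _.
have S_shift : S = chi x0 * S.
  rewrite {1}/S (reindex_inj (addIr w)) mulr_sumr; apply: eq_bigr => y _ /=.
  by rewrite dotvDl (chiD hchi) dotv_delta divfK // mulrC.
have : (1 - chi x0) * S = 0 by rewrite mulrBl mul1r -S_shift subrr.
by move/eqP; rewrite mul0r mulf_eq0 subr_eq0 eq_sym (negbTE chi_x0) => /eqP.
Qed.

Lemma parseval d (f : 'rV[F]_d -> algC) :
  \sum_y `|fourier chi f y| ^+ 2 = (#|F|%:R ^+ d)^-1 * \sum_x `|f x| ^+ 2.
Proof.
set qd : algC := #|F|%:R ^+ d.
have qd_neq0 : qd != 0 by rewrite expf_neq0 // card_neq0.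
have qd_real : qd^* = qd by rewrite /qd rmorphXn /= conjC_nat.
have expand y : `|fourier chi f y| ^+ 2 =
    (qd ^+ 2)^-1 * \sum_x' \sum_x f x' * (f x)^* * chi (dotv y (x - x')).
  rewrite normCK /fourier rmorphM rmorph_sum rmorphV ?unitfE //= -/qd qd_real.
  rewrite mulrACA -invfM -expr2; congr (_ * _).
  rewrite mulr_suml; apply: eq_bigr => x' _; rewrite mulr_sumr; apply: eq_bigr => x _.
  by rewrite rmorphM /= conj_chi // opprK dotvBr (chiD hchi); ring.
(* Orthogonality keeps only the diagonal terms x = x'. *)
have diagonal x' : \sum_y \sum_x f x' * (f x)^* * chi (dotv y (x - x')) =
    f x' * (f x')^* * qd.
  rewrite exchange_big (bigD1 x') //= -mulr_sumr char_sum_dotv subrr eqxx mul1r.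
  rewrite big1 ?addr0 // => x x_neq.
  by rewrite -mulr_sumr char_sum_dotv subr_eq0 (negbTE x_neq) mul0r mulr0.
rewrite (eq_bigr _ (fun y _ => expand y)) -mulr_sumr exchange_big.
rewrite (eq_bigr _ (fun x' _ => diagonal x')) -mulr_suml.
rewrite (eq_bigr _ (fun x _ => normCK (f x))).
by field.
Qed.

Lemma sum_indic (T : finType) (E : {set T}) : \sum_x indic E x = #|E|%:R.
Proof.
rewrite -sum1_card natr_sum [RHS]big_mkcond; apply: eq_bigr => x _.
by rewrite /indic; case: (x \in E).
Qed.

Lemma parseval_indic d (E : {set 'rV[F]_d}) :
  \sum_y `|fourier chi (indic E) y| ^+ 2 = (#|F|%:R ^+ d)^-1 * #|E|%:R.
Proof.
rewrite parseval -sum_indic; congr (_ * _); apply: eq_bigr => x _.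
by rewrite /indic; case: (x \in E); rewrite ?normr1 ?normr0 ?expr1n ?expr0n.
Qed.

End Parseval.

(* A line {y} x F meets a sphere ||x|| = r in at most two points: the
   equation a + c^2 = r has at most the two roots +-c0. *)
Lemma card_line_sphere_le2 (F : finFieldType) (a r : F) :
  \sum_(c : F) ((a + c ^+ 2 == r)%:R : algC) <= 2.
Proof.
have [c0 c0_root | no_root] := pickP (fun c => a + c ^+ 2 == r); last first.
  by rewrite big1 ?ler0n // => c _; rewrite no_root.
have roots c : (a + c ^+ 2 == r) = (c == c0) || (c == - c0).
  by rewrite -(eqP c0_root) (inj_eq (addrI a)) eqf_sqr.
have sum_pt x : \sum_(c : F) ((c == x)%:R : algC) = 1.
  by rewrite (bigD1 x) //= eqxx big1 ?addr0 // => c /negbTE->.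
apply: le_trans (_ : \sum_c ((c == c0)%:R + (c == - c0)%:R) <= _).
  apply: ler_sum => c _; rewrite roots -natrD ler_nat.
  by case: (c == c0); case: (c == - c0).
by rewrite big_split /= !sum_pt.
Qed.

Section ProductSplitting.
Variables (F : finFieldType) (n : nat).

Definition joinv (y : 'rV[F]_n) (t : F) : 'rV[F]_(n + 1) := row_mx y t%:M.

Lemma sum_joinv (H : 'rV[F]_(n + 1) -> algC) :
  \sum_m H m = \sum_(y : 'rV[F]_n) \sum_(t : F) H (joinv y t).
Proof.
rewrite pair_big /= (reindex (fun p : 'rV[F]_n * F => joinv p.1 p.2)) //=.
exists (fun m : 'rV[F]_(n + 1) => (lsubmx m, rsubmx m 0 0)) => [[y t] _|m _] /=.
  by rewrite /joinv row_mxKl row_mxKr mxE eqxx mulr1n.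
by rewrite /joinv -mx11_scalar hsubmxK.
Qed.

Lemma sum_ord_split (f : 'I_(n + 1) -> F) :
  \sum_(i < n + 1) f i = \sum_(i < n) f (lshift 1 i) + f (rshift n ord0).
Proof. by rewrite big_split_ord big_ord1. Qed.

Lemma dotv_joinv (a b : 'rV[F]_n) (s t : F) :
  dotv (joinv a s) (joinv b t) = dotv a b + s * t.
Proof.
rewrite /dotv sum_ord_split /joinv; congr (_ + _).
  by apply: eq_bigr => i _; rewrite !row_mxEl.
by rewrite !row_mxEr !mxE eqxx !mulr1n.
Qed.

Lemma normq_joinv (a : 'rV[F]_n) (s : F) : Defs.normq (joinv a s) = Defs.normq a + s ^+ 2.
Proof.
rewrite /Defs.normq sum_ord_split /joinv; congr (_ + _).
  by apply: eq_bigr => i _; rewrite !row_mxEl.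
by rewrite !row_mxEr !mxE eqxx !mulr1n.
Qed.

Lemma indic_prodset_joinv (Ebar : {set 'rV[F]_n}) (A : {set F}) y t :
  indic (prodset Ebar A) (joinv y t) = indic Ebar y * indic A t.
Proof.
rewrite /indic /prodset inE /joinv row_mxKl row_mxKr mxE eqxx mulr1n.
by case: (y \in Ebar); case: (t \in A); rewrite ?mulr1 ?mulr0.
Qed.

(* Counting step: if |H(y, c)| <= |G(y)| b everywhere, then every sphere
   carries at most 2 b^2 times the L^2 mass of G, since each y occurs on a
   sphere with at most two values of c. *)
Lemma sphere_sum_le (H : 'rV[F]_(n + 1) -> algC) (G : 'rV[F]_n -> algC) (b : algC) :
  0 <= b -> (forall y c, `|H (joinv y c)| <= `|G y| * b) -> forall r,
  \sum_(m in sphere (n + 1) r) `|H m| ^+ 2 <= 2 * b ^+ 2 * \sum_y `|G y| ^+ 2.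
Proof.
move=> b_ge0 H_le r; rewrite big_mkcond sum_joinv mulr_sumr; apply: ler_sum => y _.
set Gy := `|G y| ^+ 2.
have Gyb_ge0 : 0 <= Gy * b ^+ 2 by rewrite mulr_ge0 ?exprn_ge0.
have term t : (if joinv y t \in sphere (n + 1) r then `|H (joinv y t)| ^+ 2 else 0)
    <= Gy * b ^+ 2 * (Defs.normq y + t ^+ 2 == r)%:R.
  rewrite inE normq_joinv; case: (_ == r); rewrite ?mulr1 ?mulr0 //.
  by rewrite /Gy -exprMn ler_pXn2r ?nnegrE ?mulr_ge0 // H_le.
apply: le_trans (ler_sum _ (fun t _ => term t)) _.
rewrite -mulr_sumr (_ : 2 * b ^+ 2 * Gy = Gy * b ^+ 2 * 2); last by ring.
by rewrite ler_wpM2l // card_line_sphere_le2.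
Qed.

Variables (chi : F -> algC).
Hypothesis hchi : nontriv_add_char chi.

Definition fourier_line (g : F -> algC) (c : F) : algC :=
  (#|F|%:R)^-1 * \sum_t chi (- (c * t)) * g t.

Lemma fourier_prodset (Ebar : {set 'rV[F]_n}) (A : {set F}) y c :
  fourier chi (indic (prodset Ebar A)) (joinv y c) =
    fourier chi (indic Ebar) y * fourier_line (indic A) c.
Proof.
rewrite /fourier /fourier_line sum_joinv exprD expr1 invfM mulrACA; congr (_ * _).
rewrite mulr_suml; apply: eq_bigr => y' _; rewrite mulr_sumr; apply: eq_bigr => t _.
by rewrite dotv_joinv indic_prodset_joinv opprD (chiD hchi); ring.
Qed.

(* Trivial bound |1_A hat(c)| <= |A| / q, from |chi| = 1. *)
Lemma norm_fourier_line_indic (A : {set F}) c :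
  `|fourier_line (indic A) c| <= (#|F|%:R)^-1 * #|A|%:R.
Proof.
rewrite /fourier_line normrM normfV normr_nat ler_wpM2l ?invr_ge0 ?ler0n //.
apply: le_trans (ler_norm_sum _ _ _) _; rewrite -sum_indic ler_sum // => t _.
by rewrite normrM norm_chi // mul1r /indic normr_nat.
Qed.

End ProductSplitting.

Lemma frakM_le (F : finFieldType) (chi : F -> algC) d (E : {set 'rV[F]_d}) (K : algC) :
  0 <= K -> (forall r, \sum_(m in sphere d r) `|fourier chi (indic E) m| ^+ 2 <= K) ->
  frakM chi E <= K.
Proof.
move=> K_ge0 sphere_le; apply: (big_ind (fun x => x <= K)) => // x y x_le y_le.
by rewrite /Order.max; case: ifP.
Qed.

Theorem mainTheorem12 (F : finFieldType) (hchar : ~~ (2%N \in [pchar F]))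
    (chi : F -> algC) (hchi : nontriv_add_char chi)
    (n : nat) (hn : (1 <= n)%N) (Ebar : {set 'rV[F]_n}) (A : {set F}) :
  frakM chi (prodset Ebar A) <=
    2 * (#|F|%:R ^+ (n + 1 + 1))^-1 * #|A|%:R ^+ 2 * #|Ebar|%:R.
Proof.
set q : algC := #|F|%:R.
pose b := q^-1 * #|A|%:R.
have b_ge0 : 0 <= b by rewrite mulr_ge0 ?invr_ge0 ?ler0n.
have factor y c : `|fourier chi (indic (prodset Ebar A)) (joinv y c)| <=
    `|fourier chi (indic Ebar) y| * b.
  by rewrite fourier_prodset // normrM ler_wpM2l // norm_fourier_line_indic.
have bound_eq : 2 * b ^+ 2 * \sum_y `|fourier chi (indic Ebar) y| ^+ 2 =
    2 * (q ^+ (n + 1 + 1))^-1 * #|A|%:R ^+ 2 * #|Ebar|%:R.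
  by rewrite parseval_indic // /b -/q !exprD !expr1; field; rewrite ?expf_neq0 card_neq0.
apply: frakM_le => [|r]; rewrite -bound_eq; last exact: sphere_sum_le.
rewrite !mulr_ge0 ?exprn_ge0 ?invr_ge0 ?ler0n //.
by apply: sumr_ge0 => y _; rewrite exprn_ge0.
Qed.
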